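(* Let $G=(S,A_1\times A_2,P,s_0,\gamma,F_1,F_2)$ be a two-player concurrent stochastic reachability game, and let $A_1^2\subseteq A_1$. Let $G^2=(S,A_1^2\times A_2,P^2,s_0,\gamma,F_1,F_2)$ be the game obtained from $G$ by eliminating all transitions enabled by pairs of a P1 action in $A_1\setminus A_1^2$ and a P2 action, i.e. $P^2(s,(a,b))=P(s,(a,b))$ if $a\in A_1^2$ and $P^2(s,(a,b))$ is undefined otherwise. Let $\mathsf{ASW}_2$ and $\mathsf{ASW}_2^2$ denote P2's almost-sure winning regions in $G$ and in $G^2$, respectively. Then $\mathsf{ASW}_2\subseteq \mathsf{ASW}_2^2$.
   Context: A two-player concurrent stochastic game on a graph with reachability objectives is a tuple $G=(S,A,P,s_0,\gamma,F_1,F_2)$ where $S$ is a finite set of states, $A=A_1\times A_2$ with $A_1$ (resp. $A_2$) the finite action set of player 1, P1 (resp. player 2, P2), $P:S\times A\to\Delta(S)$ is a probabilistic transition function (at each state both players choose actions simultaneously and the next state is drawn from $P(\cdot\mid s,(a,b))$), $s_0\in S$ is an initial state, $\gamma\in(0,1]$ a discount factor, and $F_1\subseteq S$, $F_2\subseteq S\setminus F_1$ are the target sets of P1 and P2; all states in $F_1\cup F_2$ are absorbing. A play is a sequence $s_0(a_0,b_0)s_1(a_1,b_1)\dots$ with $P(s_{i+1}\mid s_i,(a_i,b_i))>0$; a (mixed) strategy of player $i$ maps finite play prefixes to distributions over $A_i$. A play satisfies the reachability objective for $F$ if some state of it lies in $F$. The almost-sure winning region of player $i$ is the set of states $s$ from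 which player $i$ has a strategy such that, for every strategy of the opponent, the induced play starting from $s$ reaches $F_i$ with probability one. *)

From mathcomp Require Import all_boot all_order all_algebra.
From mathcomp Require Import reals.
Set Implicit Arguments. Unset Strict Implicit. Unset Printing Implicit Defensive.
Import Order.TTheory GRing.Theory Num.Theory.
Local Open Scope ring_scope.

Definition is_dist (R : realType) (T : finType) (d : T -> R) : Prop :=
  (forall x, 0 <= d x) /\ \sum_(x : T) d x = 1.

(* Finite play prefixes s_0 (a_0,b_0) s_1 ... (a_{k-1},b_{k-1}) s_k are
   represented as the list [(s_0,a_0,b_0); ...; (s_{k-1},a_{k-1},b_{k-1})]
   together with the current state s_k. *)
Definition strat (R : realType) (S A : finType) (A1 A2 : finType) :=
  seq (S * A1 * A2) -> S -> A -> R.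

Definition valid_strat (R : realType) (S A1 A2 A : finType)
  (st : seq (S * A1 * A2) -> S -> A -> R) : Prop :=
  forall h s, is_dist (st h s).

Fixpoint reach_within (R : realType) (S A1 A2 : finType)
  (P : S -> A1 -> A2 -> S -> R)
  (sig : seq (S * A1 * A2) -> S -> A1 -> R)
  (tau : seq (S * A1 * A2) -> S -> A2 -> R)
  (F : {set S}) (n : nat) (h : seq (S * A1 * A2)) (s : S) : R :=
  if s \in F then 1 else
  match n with
  | 0 => 0
  | n'.+1 =>
      \sum_(a : A1) \sum_(b : A2) \sum_(t : S)
        sig h s a * tau h s b * P s a b t
          * reach_within P sig tau F n' (rcons h (s, a, b)) t
  end.

(* The probability of reaching F (= limit of the nondecreasing sequence
   reach_within n) equals 1, written out via epsilon-n. *)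
Definition reaches_as (R : realType) (S A1 A2 : finType)
  (P : S -> A1 -> A2 -> S -> R)
  (sig : seq (S * A1 * A2) -> S -> A1 -> R)
  (tau : seq (S * A1 * A2) -> S -> A2 -> R)
  (F : {set S}) (s : S) : Prop :=
  forall eps : R, 0 < eps ->
    exists n : nat, 1 - eps <= reach_within P sig tau F n [::] s.

(* Almost-sure winning region of P2 (target F2) in the game whose P1 action
   set is the subset B1 of A1 (transitions are P restricted to B1 x A2):
   P1's strategies are exactly the mixed strategies supported on B1. *)
Definition ASW2 (R : realType) (S A1 A2 : finType)
  (P : S -> A1 -> A2 -> S -> R) (B1 : {set A1}) (F2 : {set S}) (s : S)
  : Prop :=
  exists tau : seq (S * A1 * A2) -> S -> A2 -> R,
    valid_strat tau /\
    forall sig : seq (S * A1 * A2) -> S -> A1 -> R,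
      valid_strat sig ->
      (forall h s' a, a \notin B1 -> sig h s' a = 0) ->
      reaches_as P sig tau F2 s.

From mathcomp Require Import all_boot all_order all_algebra.
From mathcomp Require Import reals.
Import Order.TTheory GRing.Theory Num.Theory.
Local Open Scope ring_scope.

Lemma ASW2_subset (R : realType) (S A1 A2 : finType)
  (P : S -> A1 -> A2 -> S -> R) (B B' : {set A1}) (F2 : {set S}) (s : S) :
  B' \subset B -> ASW2 P B F2 s -> ASW2 P B' F2 s.
Proof.
move=> /subsetP sB'B [tau [Htau Hwin]]; exists tau; split=> // sig Hsig suppB'.
apply: Hwin => // h s' a aNB; apply: suppB'.
by apply: contra aNB; apply: sB'B.
Qed.

Theorem lemma2 (R : realType) (S A1 A2 : finType)
  (P : S -> A1 -> A2 -> S -> R) (gamma : R) (s0 : S)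
  (F1 F2 : {set S}) (A12 : {set A1})
  (HP : forall s a b, is_dist (P s a b))
  (Hgamma : 0 < gamma <= 1)
  (HF : [disjoint F1 & F2])
  (Habs : forall s a b, s \in F1 :|: F2 -> P s a b s = 1) :
  forall s : S, ASW2 P [set: A1] F2 s -> ASW2 P A12 F2 s.
Proof. by move=> s; apply: ASW2_subset; apply: subsetT. Qed.
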